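(* Let $a<b$ be real numbers and let $0<\alpha,\beta\leq 1$ with $1<\alpha+\beta\leq 2$. Define $G:[a,b]\times[a,b]\to\mathbb{R}$ by $$G(t,r)=\begin{cases}\dfrac{1}{\Gamma(\alpha)\Gamma(\beta)}\displaystyle\int_a^r (t-s)^{\beta-1}(r-s)^{\alpha-1}\,ds, & a\leq r\leq t\leq b,\\[0.3cm] \dfrac{1}{\Gamma(\alpha)\Gamma(\beta)}\displaystyle\int_a^t (t-s)^{\beta-1}(r-s)^{\alpha-1}\,ds, & a\leq t\leq r\leq b.\end{cases}$$ Then: (1) $G(t,r)\geq 0$ for all $a\leq r\leq t\leq b$; (2) $\max_{t\in[a,b]}G(t,r)=G(r,r)$ for all $r\in[a,b]$; (3) $\max_{r\in[a,b]}G(r,r)=\dfrac{(b-a)^{\alpha+\beta-1}}{(\alpha+\beta-1)\Gamma(\alpha)\Gamma(\beta)}$.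
   Context: $\Gamma$ denotes the Gamma function. *)

From HB Require Import structures.
From mathcomp Require Import all_boot all_order all_algebra.
From mathcomp Require Import all_classical all_reals all_analysis.
Set Implicit Arguments. Unset Strict Implicit. Unset Printing Implicit Defensive.
Import Order.TTheory GRing.Theory Num.Theory.
Local Open Scope classical_set_scope.
Local Open Scope ring_scope.

Definition Gamma {R : realType} (x : R) : R :=
  Rintegral (@lebesgue_measure R) `]0%R, +oo[
    (fun t : R => powR t (x - 1) * expR (- t)).

(* The kernel G(t,r) of the paper. The integrands are taken as (improper,
   absolutely convergent) Lebesgue integrals. *)
Definition Gker {R : realType} (a alpha beta : R) (t r : R) : R :=
  (Gamma alpha * Gamma beta)^-1 *
  (if r <= t then
     Rintegral (@lebesgue_measure R) `[a, r]
       (fun s : R => powR (t - s) (beta - 1) * powR (r - s) (alpha - 1))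
   else
     Rintegral (@lebesgue_measure R) `[a, t]
       (fun s : R => powR (t - s) (beta - 1) * powR (r - s) (alpha - 1))).

(* Write g = alpha + beta - 1.  On the diagonal the integrand of G(r,r) is
   (r - s)^(g - 1), whose integral over [a, r] is (r - a)^g / g: for g < 1 it
   blows up at s = r, so the fundamental theorem of calculus is applied on
   [a, c] with c < r and monotone convergence passes to c -> r.  Off the
   diagonal, the exponents alpha - 1 and beta - 1 are nonpositive, so
   (x - s)^q decreases in x and the integrand of G(t,r) is bounded by
   (m - s)^(g - 1) with m = min(t, r), on the integration range [a, m].  Hence
   G(t,r) <= G(m,m) <= G(r,r) <= G(b,b), the diagonal being increasing. *)

From HB Require Import structures.
From mathcomp Require Import all_boot all_order all_algebra.
From mathcomp Require Import all_classical all_reals all_analysis.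
From mathcomp Require Import measurable_realfun ring lra.
Import Order.TTheory GRing.Theory Num.Theory numFieldNormedType.Exports.
Local Open Scope classical_set_scope.
Local Open Scope ring_scope.

Section improper_FTC.
Context {R : realType}.
Local Notation mu := (@lebesgue_measure R).

Lemma ge0_integral_itvco_cvg (f : R -> R) (a r : R) (c : R^nat) :
  measurable_fun `[a, r[ f -> {in `[a, r[, forall x, 0 <= f x} ->
  nondecreasing_seq c -> (forall n, c n < r) -> c n @[n --> \oo] --> r ->
  (\int[mu]_(x in `[a, c n]) (f x)%:E @[n --> \oo] -->
   \int[mu]_(x in `[a, r[) (f x)%:E)%E.
Proof.
move=> mf f0 ndc cr cvgc.
have mD : measurable `[a, r[ by exact: measurable_itv.
have mfE := (measurable_EFinP `[a, r[ f).2 mf.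
have sub n : `[a, c n] `<=` `[a, r[.
  by apply: subset_itvl; rewrite bnd_simp; exact: cr.
pose g n := (EFin \o f) \_ `[a, c n].
have mg n : measurable_fun `[a, r[ (g n).
  apply: (measurable_funS measurableT (@subsetT _ _)).
  apply/(measurable_restrictT _ _).1; first exact: measurable_itv.
  exact: measurable_funS mfE.
have g0 k x : `[a, r[%classic x -> (0 <= g k x)%E.
  by move=> _; apply: erestrict_ge0 => y /sub ay; rewrite lee_fin f0.
have ndg x : `[a, r[%classic x -> nondecreasing_seq (g^~ x).
  move=> xD m n mn; have [xm|xm] := boolP (x \in `[a, c m]%classic).
    rewrite /g !patchE xm mem_set //; apply: subset_itvl (set_mem xm).
    by rewrite bnd_simp ndc.
  by rewrite /g patchE (negbTE xm); exact: g0.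
have gE n : (\int[mu]_(x in `[a, r[) g n x = \int[mu]_(x in `[a, c n]) (f x)%:E)%E.
  by rewrite -integral_mkcondr setIidr.
under eq_cvg do rewrite -gE.
have -> : (\int[mu]_(x in `[a, r[) (f x)%:E = \int[mu]_(x in `[a, r[) limn (g^~ x))%E.
  apply: eq_integral => x; rewrite inE /= in_itv /= => /andP[ax xr].
  apply/esym/lim_near_cst => //; near=> n.
  rewrite /g patchE mem_set //= in_itv /= ax /=.
  by near: n; move: xr; apply: cvgr_ge.
exact: cvg_monotone_convergence.
Unshelve. all: by end_near. Qed.

Lemma ge0_continuous_FTC2_itvco (f F : R -> R) (a r : R) : a < r ->
  {in `[a, r[, forall x, 0 <= f x} ->
  {within `[a, r[, continuous f} ->
  derivable_oo_LRcontinuous F a r ->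
  {in `]a, r[, F^`()%classic =1 f} ->
  (\int[mu]_(x in `[a, r]) (f x)%:E = (F r)%:E - (F a)%:E)%E.
Proof.
move=> ar f0 cf [dF Fa Fr] F'f.
have mf : measurable_fun `[a, r[ f.
  exact: subspace_continuous_measurable_fun (measurable_itv _) cf.
rewrite -integral_itv_bndo_bndc; last exact/measurable_EFinP.
pose k := (r - a) / 2; have k0 : 0 < k by rewrite divr_gt0 // subr_gt0.
pose c n := r - k * harmonic n.
have hk n : 0 < k * harmonic n <= k.
  by rewrite mulr_gt0 ?harmonic_gt0 //= ger_pMr // invf_le1 // ler1n.
have cr n : c n < r by have := hk n; rewrite /c; lra.
have ac n : a < c n by have := hk n; rewrite /c /k; lra.
have ndc : nondecreasing_seq c.
  move=> m n mn; rewrite /c lerD2l lerN2 ler_pM2l //=.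
  by rewrite lef_pV2 ?posrE // ler_nat.
have cvgc : c n @[n --> \oo] --> r.
  rewrite -[X in _ --> X]subr0 -(mulr0 k).
  by apply: cvgB; [exact: cvg_cst | apply: cvgM; [exact: cvg_cst | exact: cvg_harmonic]].
have FTC n : (\int[mu]_(x in `[a, c n]) (f x)%:E = (F (c n) - F a)%:E)%E.
  have acr : `[a, c n] `<=` `[a, r[.
    by apply: subset_itvl; rewrite bnd_simp; exact: cr.
  have acr_oo : `]a, c n[ `<=` `]a, r[.
    by apply: subset_itvl; rewrite bnd_simp; exact: ltW.
  rewrite EFinB; apply: continuous_FTC2 (ac n) _ _ _.
  - exact: continuous_subspaceW acr cf.
  - split=> //; first exact: in1_subset_itv acr_oo dF.
    apply/cvg_at_left_filter/differentiable_continuous/derivable1_diffP.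
    by apply: dF; rewrite in_itv /= ac cr.
  - exact: in1_subset_itv acr_oo F'f.
rewrite -(cvg_lim _ (ge0_integral_itvco_cvg f a r c mf f0 ndc cr cvgc)) //.
apply: cvg_lim => //; under eq_cvg do rewrite FTC.
rewrite -EFinB; apply: cvg_EFin; first exact: nearW.
by apply: cvgB (cvg_cst _); exact: (cvg_at_leftP F r (F r)).1 Fr c (conj cr cvgc).
Qed.

End improper_FTC.

Section powR_subr.
Context {R : realType}.
Local Notation mu := (@lebesgue_measure R).

Lemma is_derive_powR_subr (r p x : R) : x < r ->
  is_derive x 1 (fun y => powR (r - y) p) (- (p * powR (r - x) (p - 1))).
Proof.
move=> xr.
have rx0 : r - x \in `]0, +oo[ by rewrite in_itv /= andbT subr_gt0.
have dsub : derivable (fun y : R => r - y) x 1.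
  by apply: derivableB; [exact: derivable_cst | exact: derivable_id].
have dpow : derivable (fun y : R => powR y p) (r - x) 1.
  exact: (@derivable_powR R 1 p _ rx0).
have -> : (fun y => powR (r - y) p) = (fun y : R => powR y p) \o (fun y => r - y) by [].
apply: DeriveDef.
  by apply/derivable1_diffP/differentiable_comp; apply/derivable1_diffP.
rewrite -derive1E derive1_comp // powR_derive1 // derive1E deriveB //.
by rewrite derive_cst derive_id sub0r mulrN1.
Qed.

Lemma powR_subr_cvg_left (r p : R) : 0 < p -> powR (r - x) p @[x --> r^'-] --> 0.
Proof.
move=> p0; apply/cvg_at_leftP => u [ur ucvg].
apply: (cvg_at_rightP _ 0 0).1 (powR_cvg0 p0) (fun n => r - u n) _; split.
  by move=> n; rewrite subr_gt0.
by rewrite -(subrr r); apply: cvgB => //; exact: cvg_cst.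
Qed.

Lemma integral_powR_subr (r a p : R) : 0 < p -> a <= r ->
  (\int[mu]_(s in `[a, r]) (powR (r - s) (p - 1))%:E = (powR (r - a) p / p)%:E)%E.
Proof.
move=> p0; rewrite le_eqVlt => /predU1P[<-|ar].
  by rewrite set_itv1 integral_set1 subrr powR0 ?gt_eqF // mul0r.
pose F := (- p^-1) \*: (fun y => powR (r - y) p).
have dF x : x < r -> is_derive x 1 F (powR (r - x) (p - 1)).
  move=> xr; have := is_deriveZ (- p^-1) (is_derive_powR_subr _ p _ xr).
  by rewrite -[_ *: _]/(_ * _) mulrNN mulrA mulVf ?mul1r // lt0r_neq0.
have Fr : F r = 0 by rewrite /F /= subrr powR0 ?lt0r_neq0 // scaler0.
rewrite (@ge0_continuous_FTC2_itvco _ _ F) //.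
- by rewrite Fr /F /= -EFinB sub0r scaleNr opprK mulrC.
- by move=> x _; exact: powR_ge0.
- apply: continuous_in_subspaceT => x; rewrite inE /= in_itv /= => /andP[_ xr].
  exact/differentiable_continuous/derivable1_diffP/ex_derive/is_derive_powR_subr.
- split.
  + by move=> x; rewrite in_itv /= => /andP[_ xr]; exact/ex_derive/dF.
  + apply: cvg_at_right_filter.
    exact/differentiable_continuous/derivable1_diffP/ex_derive/dF.
  + rewrite Fr -(scaler0 _ (- p^-1)); apply: cvgZ; first exact: cvg_cst.
    exact: powR_subr_cvg_left.
- move=> x; rewrite in_itv /= => /andP[_ xr].
  by rewrite derive1E; have [] := dF x xr.
Qed.

Lemma Rintegral_powR_subr (r a p : R) : 0 < p -> a <= r ->
  \int[mu]_(s in `[a, r]) powR (r - s) (p - 1) = powR (r - a) p / p.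
Proof. by move=> p0 ar; rewrite /Rintegral integral_powR_subr. Qed.

Lemma measurable_powR_subr (r p : R) :
  measurable_fun setT (fun s : R => powR (r - s) p).
Proof.
apply: (measurableT_comp (measurable_powR _)).
exact: measurable_funB.
Qed.

Lemma Rintegral_le_powR_subr (a u p : R) (h : R -> R) : 0 < p -> a <= u ->
  measurable_fun `[a, u] h -> {in `[a, u], forall s, 0 <= h s} ->
  {in `[a, u[, forall s, h s <= powR (u - s) (p - 1)} ->
  \int[mu]_(s in `[a, u]) h s <= powR (u - a) p / p.
Proof.
move=> p0 au mh h0 hle.
have sub_co : `[a, u[ `<=` `[a, u] by apply: subset_itvl; rewrite bnd_simp.
have mhE := (measurable_EFinP _ h).2 mh.
have mpE := (measurable_EFinP _ _).2 (measurable_powR_subr u (p - 1)).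
have le : (\int[mu]_(s in `[a, u]) (h s)%:E <= (powR (u - a) p / p)%:E)%E.
  rewrite -integral_powR_subr // -!integral_itv_bndo_bndc; last 2 first.
  - exact: measurable_funS mpE.
  - exact: measurable_funS mhE.
  apply: ge0_le_integral; first exact: measurable_itv.
  - by move=> s /sub_co su; rewrite lee_fin h0.
  - exact: measurable_funS mhE.
  - exact: measurable_funS mpE.
  - by move=> s su; rewrite lee_fin hle.
have i0 : (0 <= \int[mu]_(s in `[a, u]) (h s)%:E)%E.
  by apply: integral_ge0 => s su; rewrite lee_fin h0.
rewrite /Rintegral -lee_fin fineK //.
by rewrite ge0_fin_numE // (le_lt_trans le) ?ltry.
Qed.

End powR_subr.

(* [powR 0 q] is [1] for [q = 0] and [0] otherwise, and [powR x q = 1] for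
   [x < 0]: with exponents of one sign the identity survives these junk values. *)
Lemma le0_powRD {R : realType} (x q1 q2 : R) : q1 <= 0 -> q2 <= 0 ->
  powR x (q1 + q2) = powR x q1 * powR x q2.
Proof.
move=> q10 q20; have [->|x0] := eqVneq x 0; last by rewrite powRD // x0 implybT.
rewrite /powR eqxx naddr_eq0 //.
by case: (q1 == 0); case: (q2 == 0); rewrite /= ?mulr1 ?mulr0.
Qed.

Lemma le0_ger_powR {R : realType} (x y q : R) : q <= 0 -> 0 < x -> x <= y ->
  powR y q <= powR x q.
Proof.
move=> q0 x0 xy; have y0 : 0 < y := lt_le_trans x0 xy.
have e z : powR z q = (powR z (- q))^-1 by rewrite -powRN opprK.
rewrite !e lef_pV2 ?posrE ?powR_gt0 //.
by apply: ge0_ler_powR; rewrite ?oppr_ge0 // nnegrE ltW.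
Qed.

Lemma Gamma_ge0 {R : realType} (x : R) : 0 <= Gamma x.
Proof. by apply: Rintegral_ge0 => t _; rewrite mulr_ge0 ?powR_ge0 ?expR_ge0. Qed.

Section kernel.
Context {R : realType} {a alpha beta : R}.
Local Notation mu := (@lebesgue_measure R).
Local Notation G := (Gker a alpha beta).
Local Notation g := (alpha + beta - 1).

Lemma GkerE t r : G t r = (Gamma alpha * Gamma beta)^-1 *
  \int[mu]_(s in `[a, Num.min t r]) (powR (t - s) (beta - 1) * powR (r - s) (alpha - 1)).
Proof. by rewrite /Gker; case: leP => [rt|/ltW tr]; rewrite ?(min_r rt) ?(min_l tr). Qed.

Lemma Gker_ge0 t r : 0 <= G t r.
Proof.
rewrite GkerE mulr_ge0 ?invr_ge0 ?mulr_ge0 ?Gamma_ge0 //.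
by apply: Rintegral_ge0 => s _; rewrite mulr_ge0 ?powR_ge0.
Qed.

Hypotheses (alpha_le1 : alpha <= 1) (beta_le1 : beta <= 1).

Lemma Gker_integrand_le t r s : s < Num.min t r ->
  powR (t - s) (beta - 1) * powR (r - s) (alpha - 1) <= powR (Num.min t r - s) (g - 1).
Proof.
move=> sm; have m0 : 0 < Num.min t r - s by rewrite subr_gt0.
have -> : g - 1 = (beta - 1) + (alpha - 1) by ring.
rewrite (le0_powRD (Num.min t r - s)) ?subr_le0 //.
by apply: ler_pM; rewrite ?powR_ge0 //; apply: le0_ger_powR;
  rewrite ?subr_le0 ?lerD2r ?ge_min ?lexx ?orbT.
Qed.

Hypothesis g_gt0 : 0 < g.

Lemma Gker_diag r : a <= r ->
  G r r = (Gamma alpha * Gamma beta)^-1 * (powR (r - a) g / g).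
Proof.
move=> ar; rewrite GkerE minxx -Rintegral_powR_subr //; congr (_ * _).
by apply: eq_Rintegral => s _; rewrite -le0_powRD ?subr_le0 //; congr powR; ring.
Qed.

Lemma Gker_diag_le x y : a <= x -> x <= y -> G x x <= G y y.
Proof.
move=> ax xy; have ay := le_trans ax xy.
rewrite !Gker_diag //.
apply: ler_wpM2l; first by rewrite invr_ge0 mulr_ge0 ?Gamma_ge0.
apply: ler_wpM2r; first by rewrite invr_ge0 ltW.
by apply: (ge0_ler_powR (ltW g_gt0)); rewrite ?nnegrE ?subr_ge0 ?lerD2r.
Qed.

Lemma Gker_le_diag_min t r : a <= t -> a <= r ->
  G t r <= G (Num.min t r) (Num.min t r).
Proof.
move=> ta ra; have am : a <= Num.min t r by rewrite le_min ta ra.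
rewrite GkerE Gker_diag //.
apply: ler_wpM2l; first by rewrite invr_ge0 mulr_ge0 ?Gamma_ge0.
apply: Rintegral_le_powR_subr => //.
- apply: measurable_funS (measurable_funM (measurable_powR_subr _ _)
    (measurable_powR_subr _ _)) => //; exact: measurable_itv.
- by move=> s _; rewrite mulr_ge0 ?powR_ge0.
- by move=> s; rewrite in_itv /= => /andP[_ sm]; exact: Gker_integrand_le.
Qed.

Lemma Gker_le_diag t r : a <= t -> a <= r -> G t r <= G r r.
Proof.
move=> ta ra; apply: le_trans (Gker_le_diag_min _ _ ta ra) _.
by apply: Gker_diag_le; rewrite ?le_min ?ta ?ra ?ge_min ?lexx ?orbT.
Qed.

End kernel.

Theorem lemma3 (R : realType) (a b alpha beta : R) :
  a < b ->
  0 < alpha -> alpha <= 1 -> 0 < beta -> beta <= 1 ->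
  1 < alpha + beta -> alpha + beta <= 2 ->
  (* (1) *)
  (forall t r, a <= r -> r <= t -> t <= b -> 0 <= Gker a alpha beta t r) /\
  (* (2) max_{t in [a,b]} G(t,r) = G(r,r) *)
  (forall r, a <= r -> r <= b ->
     forall t, a <= t -> t <= b ->
       Gker a alpha beta t r <= Gker a alpha beta r r) /\
  (* (3) max_{r in [a,b]} G(r,r) = (b-a)^(alpha+beta-1) / ((alpha+beta-1) Gamma(alpha) Gamma(beta)) *)
  ((forall r, a <= r -> r <= b ->
      Gker a alpha beta r r <=
        powR (b - a) (alpha + beta - 1) /
          ((alpha + beta - 1) * Gamma alpha * Gamma beta)) /\
   (exists2 r, a <= r <= b &
      Gker a alpha beta r r =
        powR (b - a) (alpha + beta - 1) /
          ((alpha + beta - 1) * Gamma alpha * Gamma beta))).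
Proof.
move=> ab _ alpha_le1 _ beta_le1 ab_gt1 _.
have g_gt0 : 0 < alpha + beta - 1 by rewrite subr_gt0.
have Gbb : Gker a alpha beta b b = powR (b - a) (alpha + beta - 1) /
    ((alpha + beta - 1) * Gamma alpha * Gamma beta).
  by rewrite (Gker_diag alpha_le1 beta_le1 g_gt0 _ (ltW ab)) !invfM; ring.
split; [|split; [|split]].
- by move=> t r *; exact: Gker_ge0.
- by move=> r ra _ t ta _; exact: Gker_le_diag.
- by move=> r ar rb; rewrite -Gbb; exact: Gker_diag_le.
- by exists b; rewrite ?lexx ?ltW.
Qed.
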